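(* For every perfect square $n$ and every integer $1\le k\le n$, \[\left|\mathbb E_{x\in\mathcal S(\sqrt n)}[x_1x_2\cdots x_k]\right|\le k^{3k}\,n^{-k/2}.\]
   Context: $\mathcal S(\sqrt n)=\{x\in\{\pm1\}^n:\sum_{i=1}^n x_i=\sqrt n\}$, and $x$ is uniform on $\mathcal S(\sqrt n)$. *)

From mathcomp Require Import all_boot all_order all_algebra.
Set Implicit Arguments. Unset Strict Implicit. Unset Printing Implicit Defensive.
Import Order.TTheory GRing.Theory Num.Theory.
Local Open Scope ring_scope.

(* A point x in {±1}^n is encoded by b : {ffun 'I_n -> bool}, x_i = spin (b i). *)
Definition spin (b : bool) : int := if b then 1 else -1.

(* S(t) = { x in {±1}^n : sum_i x_i = t }, here with t = m (= sqrt n). *)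
Definition Sset (n m : nat) : {set {ffun 'I_n -> bool}} :=
  [set x : {ffun 'I_n -> bool} | \sum_(i < n) spin (x i) == (m%:Z)].

(* E_{x uniform in S}[x_1 ... x_k]  (coordinates 1..k = indices 0..k-1). *)
Definition moment (R : numFieldType) (n m k : nat) : R :=
  (\sum_(x in Sset n m) \prod_(i < n | (i < k)%N) (spin (x i))%:~R)
    / (#|Sset n m|)%:R.

From mathcomp Require Import all_boot all_order all_algebra all_fingroup zify ring.
Import Order.TTheory GRing.Theory Num.Theory.
Set Implicit Arguments. Unset Strict Implicit. Unset Printing Implicit Defensive.
Local Open Scope ring_scope.

(* Let N = #|S(m)| and, for j <= n, let T_j be the
   unnormalized prefix correlation  T_j = sum_{x in S(m)} x_1 ... x_j,  so
   that the moment is T_k / N.  Since S(m) is invariant under permutations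
   of the coordinates, the correlation of any j coordinates equals T_j.
   Multiplying T_j by m = sum_i x_i and splitting according to whether
   i <= j (then x_i^2 = 1 removes a factor) or i > j (a factor is added)
   gives the three-term recurrence
        m T_j = j T_{j-1} + (n - j) T_{j+1}.
   With n = m^2 and the weighted quantities W_j = |T_j| m^j, this yields
   (n-j-1) W_{j+2} <= m^2 (W_{j+1} + (j+1) W_j), hence W_{j+2} <=
   2 (W_{j+1} + (j+1) W_j) as long as 2(j+2) <= n+2.  A two-step induction
   then gives W_k <= N k^{3k} in that range; for larger k the trivial bound
   |T_k| <= N suffices because then m <= k. *)

Section PrefixCorrelations.
Variables (R : realFieldType) (n m : nat).

Definition spinR (b : bool) : R := (spin b)%:~R.

Lemma spinR_sq (b : bool) : spinR b * spinR b = 1.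
Proof. by case: b; rewrite /spinR /spin /= ?mulrNN mulr1. Qed.

Lemma norm_spinR (b : bool) : `|spinR b| = 1.
Proof. by case: b; rewrite /spinR /spin /= ?normrN normr1. Qed.

Lemma sum_spinR_Sset (x : {ffun 'I_n -> bool}) :
  x \in Sset n m -> \sum_i spinR (x i) = m%:R.
Proof. by rewrite inE => /eqP sum_x; rewrite /spinR -rmorph_sum sum_x. Qed.

Definition corr (P : pred 'I_n) : R :=
  \sum_(x in Sset n m) \prod_(i | P i) spinR (x i).

(* S(m) is invariant under permuting coordinates, hence so is corr. *)
Lemma corr_perm (P : pred 'I_n) (s : {perm 'I_n}) :
  corr P = corr (fun i => P (s i)).
Proof.
rewrite /corr.
under eq_bigr => x _ do rewrite (reindex_inj (@perm_inj _ s)).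
pose permute (x : {ffun 'I_n -> bool}) := [ffun i => x (s i)].
rewrite [RHS](reindex permute); last first.
  exists (fun x : {ffun 'I_n -> bool} => [ffun i => x ((s^-1)%g i)]) => x _;
    by apply/ffunP => i; rewrite !ffunE ?permKV ?permK.
apply: eq_big => [x|x _]; last by apply: eq_bigr => i _; rewrite ffunE.
rewrite !inE (reindex_inj (@perm_inj _ s)) /=.
by under [in RHS]eq_bigr => i _ do rewrite ffunE.
Qed.

Definition pcorr (j : nat) : R := corr (fun i => (i < j)%N).

Lemma moment_pcorr (k : nat) : moment R n m k = pcorr k / #|Sset n m|%:R.
Proof. by []. Qed.

Lemma pcorr0 : pcorr 0 = #|Sset n m|%:R.
Proof.
rewrite /pcorr /corr (eq_bigr (fun _ => 1)) ?sumr_const // => x _.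
by rewrite big_pred0.
Qed.

(* Trivial bound: each product of spins has norm 1. *)
Lemma norm_pcorr_le (j : nat) : `|pcorr j| <= #|Sset n m|%:R.
Proof.
apply: le_trans (ler_norm_sum _ _ _) _.
rewrite -sumr_const; apply: ler_sum => x _.
by rewrite normr_prod big1 // => i _; rewrite norm_spinR.
Qed.

Lemma sum_const_below (j : nat) (c : R) :
  (j <= n)%N -> \sum_(i < n | (i < j)%N) c = c *+ j.
Proof.
move=> le_jn.
by rewrite -(big_ord_widen_cond _ predT (fun _ => c) le_jn) sumr_const card_ord.
Qed.

Lemma sum_const_above (j : nat) (c : R) :
  (j <= n)%N -> \sum_(i < n | ~~ (i < j)%N) c = c *+ (n - j).
Proof.
move=> le_jn; rewrite mulrnBr // -(@sum_const_below j c le_jn).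
have -> : c *+ n = \sum_(i < n) c by rewrite sumr_const card_ord.
by rewrite [in RHS](bigID (fun i : 'I_n => (i < j)%N)) /= addrAC subrr add0r.
Qed.

Lemma prod_prefix_mulr (j : nat) (x : {ffun 'I_n -> bool}) (i : 'I_n) :
  (\prod_(l : 'I_n | (l < j)%N) spinR (x l)) * spinR (x i) =
  if (i < j)%N then \prod_(l : 'I_n | (l < j)%N && (l != i)) spinR (x l)
  else \prod_(l : 'I_n | (l < j)%N || (l == i)) spinR (x l).
Proof.
case: ifP => lt_ij; first by rewrite (bigD1 i) //= mulrC mulrA spinR_sq mul1r.
rewrite [RHS](bigD1 i) /= ?eqxx ?orbT // mulrC; congr (_ * _).
by apply: eq_bigl => l; case: (eqVneq l i) => [->|_]; rewrite ?lt_ij ?andbT ?orbF.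
Qed.

(* By permutation invariance, dropping one of the first j coordinates or
   adding one of the others gives T_{j-1}, resp. T_{j+1}. *)
Lemma corr_prefix_drop (j : nat) (i : 'I_n) : (i < j)%N -> (j <= n)%N ->
  corr (fun l => (l < j)%N && (l != i)) = pcorr j.-1.
Proof.
move=> lt_ij le_jn; have lt_jn : (j.-1 < n)%N by lia.
rewrite /pcorr (corr_perm _ (tperm i (Ordinal lt_jn))).
apply: eq_bigr => x _; apply: eq_bigl => l /=.
case: tpermP => [->|->|/eqP ne_li /eqP ne_lj];
  last move: ne_li ne_lj; rewrite -?val_eqE /=; lia.
Qed.

Lemma corr_prefix_add (j : nat) (i : 'I_n) : ~~ (i < j)%N -> (j < n)%N ->
  corr (fun l => (l < j)%N || (l == i)) = pcorr j.+1.
Proof.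
move=> le_ji lt_jn.
rewrite /pcorr (corr_perm _ (tperm i (Ordinal lt_jn))).
apply: eq_bigr => x _; apply: eq_bigl => l /=.
case: tpermP => [->|->|/eqP ne_li /eqP ne_lj];
  last move: ne_li ne_lj; rewrite -?val_eqE /=; lia.
Qed.

Lemma pcorr_rec (j : nat) : (j < n)%N ->
  m%:R * pcorr j = j%:R * pcorr j.-1 + (n - j)%:R * pcorr j.+1.
Proof.
move=> lt_jn.
have -> : m%:R * pcorr j = \sum_(i < n) \sum_(x in Sset n m)
    (\prod_(l : 'I_n | (l < j)%N) spinR (x l)) * spinR (x i).
  rewrite mulr_sumr exchange_big /=; apply: eq_bigr => x Sx.
  by rewrite -(sum_spinR_Sset Sx) mulrC mulr_sumr.
rewrite (bigID (fun i : 'I_n => (i < j)%N)) /=.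
rewrite (eq_bigr (fun _ => pcorr j.-1)) => [|i lt_ij]; last first.
  rewrite -(corr_prefix_drop lt_ij (ltnW lt_jn)).
  by apply: eq_bigr => x _; rewrite prod_prefix_mulr lt_ij.
rewrite [X in _ + X](eq_bigr (fun _ => pcorr j.+1)) => [|i le_ji]; last first.
  rewrite -(corr_prefix_add le_ji lt_jn).
  by apply: eq_bigr => x _; rewrite prod_prefix_mulr (negbTE le_ji).
by rewrite sum_const_below ?sum_const_above ?(ltnW lt_jn) // !mulr_natl.
Qed.

Definition wcorr (j : nat) : R := `|pcorr j| * m%:R ^+ j.

Lemma wcorr_rec (j : nat) : (j.+1 < n)%N ->
  (n - j.+1)%:R * wcorr j.+2 <= m%:R ^+ 2 * (wcorr j.+1 + j.+1%:R * wcorr j).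
Proof.
move=> lt_jn.
have rec_jp2 : (n - j.+1)%:R * pcorr j.+2 = m%:R * pcorr j.+1 - j.+1%:R * pcorr j.
  by rewrite (pcorr_rec lt_jn) /= addrAC subrr add0r.
have norm_rec : (n - j.+1)%:R * `|pcorr j.+2| <=
    m%:R * `|pcorr j.+1| + j.+1%:R * `|pcorr j|.
  rewrite -[(n - _)%:R]normr_nat -normrM rec_jp2.
  by apply: le_trans (ler_normB _ _) _; rewrite !normrM !normr_nat.
have -> : m%:R ^+ 2 * (`|pcorr j.+1| * m%:R ^+ j.+1 + j.+1%:R * (`|pcorr j| * m%:R ^+ j))
    = (m%:R * `|pcorr j.+1| + j.+1%:R * `|pcorr j|) * m%:R ^+ j.+2.
  by rewrite !exprS; ring.
by rewrite mulrA ler_wpM2r // exprn_ge0.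
Qed.

End PrefixCorrelations.

(* If r c <= mu^2 (b + s a) with mu > 0 and mu^2 <= 2 r, then c <= 2 (b + s a):
   this is how the recurrence is used while n - j stays above n / 2. *)
Lemma halving_step (R : realFieldType) (mu r s a b c : R) :
  0 < mu -> mu ^+ 2 <= 2 * r -> 0 <= c ->
  r * c <= mu ^+ 2 * (b + s * a) -> c <= 2 * (b + s * a).
Proof.
move=> mu_gt0 mu2_le c_ge0 rc_le.
rewrite -(ler_pM2l (exprn_gt0 2 mu_gt0)).
apply: le_trans (_ : 2 * (r * c) <= _); first by rewrite mulrA ler_wpM2r.
by rewrite [in X in _ <= X]mulrCA ler_pM2l // ltr0n.
Qed.

Lemma exponent_step (j : nat) :
  (2 * (j.+1 ^ (3 * j.+1) + j.+1 * j ^ (3 * j)) <= j.+2 ^ (3 * j.+2))%N.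
Proof.
have -> : (j.+2 ^ (3 * j.+2) = j.+2 ^ 3 * j.+2 ^ (3 * j.+1))%N.
  by rewrite -expnD; congr (_ ^ _)%N; lia.
have le_base : (j.+1 ^ (3 * j.+1) <= j.+2 ^ (3 * j.+1))%N by rewrite leq_exp2r.
have le_lower : (j.+1 * j ^ (3 * j) <= j.+2 * j.+2 ^ (3 * j.+1))%N.
  apply: leq_mul => //; apply: (@leq_trans (j.+2 ^ (3 * j))).
    by case: (posnP j) => [->|j_gt0] //; rewrite leq_exp2r //; lia.
  by rewrite leq_pexp2l //; lia.
have le_cube : (2 * (1 + j.+2) <= j.+2 ^ 3)%N by rewrite !expnS expn0; nia.
move: le_base le_lower le_cube.
move: (j.+1 ^ _)%N (j ^ _)%N (j.+2 ^ (3 * j.+1))%N (j.+2 ^ 3)%N => A B X C.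
nia.
Qed.

Lemma wcorr_bound (R : realFieldType) (n m k : nat) :
  n = (m ^ 2)%N -> (0 < m)%N -> (2 * k <= n + 2)%N ->
  wcorr R n m k <= #|Sset n m|%:R * (k ^ (3 * k))%:R.
Proof.
move=> n_sq m_gt0; set N : R := #|Sset n m|%:R.
have mR_gt0 : (0 : R) < m%:R by rewrite ltr0n.
have nR : (n%:R : R) = m%:R ^+ 2 by rewrite n_sq natrX.
elim/ltn_ind: k => -[|[|j]] IH k_le.
- by rewrite /wcorr pcorr0 expr0 mulr1 muln0 expn0 mulr1 ger0_norm.
- (* m T_0 = n T_1 with n = m^2, i.e. W_1 = T_1 m = N *)
  have n_gt0 : (0 < n)%N by rewrite n_sq expn_gt0 m_gt0.
  have := pcorr_rec R m n_gt0; rewrite pcorr0 mul0r add0r subn0 nR => rec0.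
  have T1m : pcorr R n m 1 * m%:R = N.
    by apply: (mulfI (lt0r_neq0 mR_gt0)); rewrite rec0; ring.
  rewrite muln1 exp1n mulr1 /wcorr expr1 -[m%:R]ger0_norm ?ler0n //.
  by rewrite -normrM T1m ger0_norm.
- (* W_{j+2} <= 2 (W_{j+1} + (j+1) W_j) <= N (j+2)^{3(j+2)} *)
  have lt_jn : (j.+1 < n)%N by lia.
  have m2_le : m%:R ^+ 2 <= 2 * (n - j.+1)%:R :> R.
    by rewrite -nR -natrM ler_nat; lia.
  have W_ge0 : 0 <= wcorr R n m j.+2 by rewrite mulr_ge0 // exprn_ge0 // ltW.
  apply: le_trans (halving_step mR_gt0 m2_le W_ge0 (wcorr_rec R m lt_jn)) _.
  have IH1 : wcorr R n m j.+1 <= N * (j.+1 ^ (3 * j.+1))%:R by apply: IH; lia.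
  have IH0 : wcorr R n m j <= N * (j ^ (3 * j))%:R by apply: IH; lia.
  apply: (@le_trans _ _ (2 * (N * (j.+1 ^ (3 * j.+1))%:R + j.+1%:R * (N * (j ^ (3 * j))%:R)))).
    by rewrite ler_pM2l // lerD // ler_wpM2l.
  have -> : 2 * (N * (j.+1 ^ (3 * j.+1))%:R + j.+1%:R * (N * (j ^ (3 * j))%:R))
      = N * (2 * (j.+1 ^ (3 * j.+1) + j.+1 * j ^ (3 * j)))%:R.
    by rewrite !natrM natrD natrM; ring.
  by rewrite ler_wpM2l // ler_nat exponent_step.
Qed.

(* Beyond 2k <= n + 2 we have m <= k, so the trivial bound already suffices. *)
Lemma pow_le_of_large_k (m k : nat) :
  ((m ^ 2) + 2 < 2 * k)%N -> (m ^ k <= k ^ (3 * k))%N.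
Proof.
move=> large_k; have le_mk : (m <= k)%N by nia.
apply: (@leq_trans (k ^ k)); first by rewrite leq_exp2r //; lia.
by rewrite leq_pexp2l //; lia.
Qed.

Theorem corollaryB7 (R : realFieldType) (n m k : nat) :
  n = (m ^ 2)%N -> (1 <= k <= n)%N ->
  `| moment R n m k | <= (k ^ (3 * k))%:R / (m ^ k)%:R.
Proof.
move=> n_sq /andP[k_gt0 le_kn].
have m_gt0 : (0 < m)%N by rewrite lt0n; apply: contraTneq le_kn => m0; rewrite n_sq m0; lia.
have mk_gt0 : (0 : R) < (m ^ k)%:R by rewrite ltr0n expn_gt0 m_gt0.
rewrite moment_pcorr; case: (posnP #|Sset n m|) => [-> | N_gt0].
  by rewrite invr0 mulr0 normr0 divr_ge0 // ltW.
have NR_gt0 : (0 : R) < #|Sset n m|%:R by rewrite ltr0n.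
rewrite normrM normfV (ger0_norm (ltW NR_gt0)) ler_pdivrMr // mulrAC ler_pdivlMr //.
case: (leqP (2 * k) (n + 2)) => [small_k | large_k].
- by rewrite natrX [X in _ <= X]mulrC; apply: wcorr_bound.
- apply: (le_trans (ler_wpM2r (ler0n _ _) (norm_pcorr_le R n m k))).
  by rewrite [X in _ <= X]mulrC ler_wpM2l // ler_nat pow_le_of_large_k // -n_sq.
Qed.
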